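(* Let $\mathcal{A}$ be an $n$-dimensional Hopf algebra over $\mathbb{C}$ (coproduct $\Delta$, counit $\varepsilon$, antipode $S$) with $S^2=\mathrm{id}$, let $\Pi_\phi$ be a representation of $\mathcal{A}$ on $V$ and $|\phi_r\rangle\in V$. Define $\mathcal{T}_r=\{a\in\mathcal{A}:(\mathrm{id}\otimes\Pi_\phi)\Delta(a)(1\otimes|\phi_r\rangle)=a\otimes|\phi_r\rangle\}$, $\mathcal{T}_l=\{a\in\mathcal{A}:(\Pi_\phi\otimes\mathrm{id})\Delta(a)(|\phi_r\rangle\otimes1)=|\phi_r\rangle\otimes a\}$, and let $\mathcal{T}$ be the largest Hopf subalgebra of $\mathcal{A}$ all of whose elements $a$ satisfy $\Pi_\phi(a)|\phi_r\rangle=\varepsilon(a)|\phi_r\rangle$. Then the following are equivalent: (1) $\mathcal{T}_r=\mathcal{T}_l$; (2) $\mathcal{T}_r$ is a Hopf subalgebra of $\mathcal{A}$; (3) $\mathcal{T}_r=\mathcal{T}$; (4) $\mathcal{T}_l\subseteq\mathcal{T}_r$.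
   Context: With $\Delta(a)=\sum a^{(1)}\otimes a^{(2)}$, $(\mathrm{id}\otimes\Pi_\phi)\Delta(a)(1\otimes|\phi_r\rangle)=\sum a^{(1)}\otimes\Pi_\phi(a^{(2)})|\phi_r\rangle\in\mathcal{A}\otimes V$ and $(\Pi_\phi\otimes\mathrm{id})\Delta(a)(|\phi_r\rangle\otimes1)=\sum \Pi_\phi(a^{(1)})|\phi_r\rangle\otimes a^{(2)}\in V\otimes\mathcal{A}$. A Hopf subalgebra is a subalgebra containing $1$, with $\Delta$ mapping it into its tensor square and $S$ mapping it into itself. *)

(* A finite-dimensional Hopf algebra over C is presented by
   structure constants on the basis e_0,...,e_{n-1} of C^n = 'rV[C]_n, where
   C := R[i] (complex numbers over a realType R, i.e. over the reals). *)
From HB Require Import structures.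
From mathcomp Require Import all_boot all_order all_algebra.
From mathcomp Require Import reals.
From mathcomp Require Import complex.
Set Implicit Arguments. Unset Strict Implicit. Unset Printing Implicit Defensive.
Import Order.TTheory GRing.Theory Num.Theory.
Local Open Scope ring_scope.

Section Hopf.
Variables (K : fieldType) (n : nat).

Definition bvec (i : 'I_n) : 'rV[K]_n := delta_mx 0 i.

(* A (x) A is identified with 'M_(n,n):  a (x) b := a^T *m b,
   so that the (j,k) entry is the coefficient of e_j (x) e_k. *)
Definition tens (a b : 'rV[K]_n) : 'M[K]_(n, n) := a^T *m b.

Record hopf_data := HopfData {
  hmul : 'I_n -> 'I_n -> 'rV[K]_n;
  hunit : 'rV[K]_n;
  hcomul : 'I_n -> 'M[K]_(n, n);
  hcounit : 'I_n -> K;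
  hanti : 'I_n -> 'rV[K]_n
}.

Variable H : hopf_data.

Definition oneA : 'rV[K]_n := hunit H.

Definition mulA (a b : 'rV[K]_n) : 'rV[K]_n :=
  \sum_i \sum_j (a 0 i * b 0 j) *: hmul H i j.
Definition comulA (a : 'rV[K]_n) : 'M[K]_(n, n) := \sum_i a 0 i *: hcomul H i.
Definition counitA (a : 'rV[K]_n) : K := \sum_i a 0 i * hcounit H i.
Definition antiA (a : 'rV[K]_n) : 'rV[K]_n := \sum_i a 0 i *: hanti H i.

(* multiplication of A (x) A : (a (x) b)(c (x) d) = ac (x) bd *)
Definition mul2 (X Y : 'M[K]_(n, n)) : 'M[K]_(n, n) :=
  \sum_i \sum_j \sum_k \sum_l
     (X i j * Y k l) *: tens (mulA (bvec i) (bvec k)) (mulA (bvec j) (bvec l)).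

Definition mS_l (X : 'M[K]_(n, n)) : 'rV[K]_n :=
  \sum_j \sum_k X j k *: mulA (antiA (bvec j)) (bvec k).
Definition mS_r (X : 'M[K]_(n, n)) : 'rV[K]_n :=
  \sum_j \sum_k X j k *: mulA (bvec j) (antiA (bvec k)).

Definition epsl (X : 'M[K]_(n, n)) : 'rV[K]_n :=
  \sum_j \sum_k (hcounit H j * X j k) *: bvec k.
Definition epsr (X : 'M[K]_(n, n)) : 'rV[K]_n :=
  \sum_j \sum_k (X j k * hcounit H k) *: bvec j.

Definition is_hopf : Prop :=
  [/\
      (forall a b c, mulA (mulA a b) c = mulA a (mulA b c)),
      (forall a, mulA oneA a = a /\ mulA a oneA = a) /\
      (* coassociativity, in coordinates on A (x) A (x) A :
         ((Delta (x) id) Delta)(e_i) = ((id (x) Delta) Delta)(e_i) *)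
      (forall i j k l,
         \sum_p hcomul H i p l * hcomul H p j k
         = \sum_p hcomul H i j p * hcomul H p k l),
      (forall a, epsl (comulA a) = a /\ epsr (comulA a) = a),
      [/\ (forall a b, comulA (mulA a b) = mul2 (comulA a) (comulA b)),
          comulA oneA = tens oneA oneA,
          (forall a b, counitA (mulA a b) = counitA a * counitA b) &
          counitA oneA = 1] &
      (forall a, mS_l (comulA a) = counitA a *: oneA /\
                 mS_r (comulA a) = counitA a *: oneA)].

Definition is_rep (V : lmodType K) (Pi : 'rV[K]_n -> V -> V) : Prop :=
  [/\ (forall a (k : K) u v, Pi a (k *: u + v) = k *: Pi a u + Pi a v),
      (forall (k : K) a b v, Pi (k *: a + b) v = k *: Pi a v + Pi b v),
      (forall a b v, Pi (mulA a b) v = Pi a (Pi b v)) &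
      (forall v, Pi oneA v = v)].

(* A (x) V is identified with 'I_n -> V (coefficient of each e_j),
   and likewise V (x) A. *)
Definition T_r (V : lmodType K) (Pi : 'rV[K]_n -> V -> V) (phi : V)
  (a : 'rV[K]_n) : Prop :=
  forall j : 'I_n, \sum_k comulA a j k *: Pi (bvec k) phi = a 0 j *: phi.
Definition T_l (V : lmodType K) (Pi : 'rV[K]_n -> V -> V) (phi : V)
  (a : 'rV[K]_n) : Prop :=
  forall k : 'I_n, \sum_j comulA a j k *: Pi (bvec j) phi = a 0 k *: phi.

Definition subspace (B : 'rV[K]_n -> Prop) : Prop :=
  B 0 /\ (forall (k : K) a b, B a -> B b -> B (k *: a + b)).

Definition in_tensor2 (B : 'rV[K]_n -> Prop) (X : 'M[K]_(n, n)) : Prop :=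
  exists m (us vs : 'I_m -> 'rV[K]_n),
    [/\ (forall i, B (us i)), (forall i, B (vs i)) &
        X = \sum_i tens (us i) (vs i)].

Definition hopf_subalg (B : 'rV[K]_n -> Prop) : Prop :=
  [/\ subspace B, B oneA,
      (forall a b, B a -> B b -> B (mulA a b)),
      (forall a, B a -> in_tensor2 B (comulA a)) &
      (forall a, B a -> B (antiA a))].

Definition fixes (V : lmodType K) (Pi : 'rV[K]_n -> V -> V) (phi : V)
  (a : 'rV[K]_n) : Prop := Pi a phi = counitA a *: phi.

Definition largest_fixing_hopf_subalg (V : lmodType K)
  (Pi : 'rV[K]_n -> V -> V) (phi : V) (T : 'rV[K]_n -> Prop) : Prop :=
  [/\ hopf_subalg T, (forall a, T a -> fixes Pi phi a) &
      (forall B, hopf_subalg B -> (forall a, B a -> fixes Pi phi a) ->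
                 forall a, B a -> T a)].

End Hopf.

From Pilot Require Import Defs.
From HB Require Import structures.
From mathcomp Require Import all_boot all_order all_algebra.
From mathcomp Require Import reals complex.
From Stdlib Require Import Classical.
Import Order.TTheory GRing.Theory Num.Theory.
Local Open Scope ring_scope.
Set Implicit Arguments. Unset Strict Implicit. Unset Printing Implicit Defensive.

(* T_r and T_l are coideals on opposite sides: Δ(T_r) ⊆ A ⊗ T_r and
   Δ(T_l) ⊆ T_l ⊗ A; applying ε to the defining identity shows that their
   elements fix φ, and T_r is a unital subalgebra.  As Δ(S a) = (S ⊗ S)Δ^op(a),
   S maps T_r into T_l and, since S^2 = id, T_l into T_r, so T_l ⊆ T_r already
   forces T_l = T_r.  When T_r = T_l the two coideal properties put Δ(T_r) in
   T_r ⊗ T_r, so T_r is a Hopf subalgebra fixing φ, hence contained in T;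
   conversely, if Δ(a) = Σ u_i ⊗ v_i with every v_i fixing φ, then
   (id ⊗ Π)Δ(a)(1 ⊗ φ) = Σ ε(v_i) u_i ⊗ φ = a ⊗ φ, so T ⊆ T_r. *)

(* all_algebra also exports a lemma named mulA (fraction.v). *)
Local Notation mulA := Defs.mulA.

Section LinearFun.
Variables (K : fieldType) (U W : lmodType K) (f : U -> W).
Hypothesis f_lin : linear f.
Let fL : {linear U -> W} := HB.pack f (GRing.isLinear.Build K U W *:%R f f_lin).

Lemma linear_fun_sum I r (P : pred I) F :
  f (\sum_(i <- r | P i) F i) = \sum_(i <- r | P i) f (F i).
Proof. exact: (linear_sum fL). Qed.

Lemma linear_funZ k u : f (k *: u) = k *: f u.
Proof. exact: (linearZZ fL). Qed.

End LinearFun.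

Section CoefficientCombinations.
Variables (K : fieldType) (W : lmodType K).

Lemma row_comb_linear n (G : 'I_n -> W) :
  linear (fun a : 'rV[K]_n => \sum_i a 0 i *: G i).
Proof.
move=> k a b; rewrite scaler_sumr -big_split; apply: eq_bigr => i _.
by rewrite !mxE scalerDl scalerA.
Qed.

Lemma matrix_comb_linear p q (G : 'I_p -> 'I_q -> W) :
  linear (fun X : 'M[K]_(p, q) => \sum_i \sum_j X i j *: G i j).
Proof.
move=> k X Y; rewrite scaler_sumr -big_split; apply: eq_bigr => i _.
rewrite scaler_sumr -big_split; apply: eq_bigr => j _.
by rewrite !mxE scalerDl scalerA.
Qed.

End CoefficientCombinations.

Section HopfDataLinear.
Variables (K : fieldType) (n : nat) (H : hopf_data K n).

Lemma comulA_linear : linear (comulA H).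
Proof. exact: row_comb_linear. Qed.

Lemma antiA_linear : linear (antiA H).
Proof. exact: row_comb_linear. Qed.

Lemma counitA_scalar : scalar (counitA H).
Proof.
move=> k a b; rewrite /counitA mulr_sumr -big_split; apply: eq_bigr => i _.
by rewrite !mxE mulrDl mulrA.
Qed.

Lemma mulA_linear a : linear (mulA H a).
Proof.
move=> k b c; rewrite /mulA scaler_sumr -big_split; apply: eq_bigr => i _.
rewrite scaler_sumr -big_split; apply: eq_bigr => j _.
by rewrite !mxE mulrDr mulrCA scalerDl scalerA.
Qed.

Lemma mulA_linear_l b : linear (mulA H ^~ b).
Proof.
move=> k a c; rewrite /mulA scaler_sumr -big_split; apply: eq_bigr => i _.
rewrite scaler_sumr -big_split; apply: eq_bigr => j _.
by rewrite !mxE mulrDl scalerDl scalerA mulrA.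
Qed.

Lemma mul2_linear X : linear (mul2 H X).
Proof.
move=> k Y Z; rewrite /mul2 scaler_sumr -big_split; apply: eq_bigr => i _.
do 3![rewrite scaler_sumr -big_split; apply: eq_bigr => ? _].
by rewrite !mxE mulrDr mulrCA scalerDl scalerA.
Qed.

Lemma mul2_linear_l Y : linear (mul2 H ^~ Y).
Proof.
move=> k X Z; rewrite /mul2 scaler_sumr -big_split; apply: eq_bigr => i _.
do 3![rewrite scaler_sumr -big_split; apply: eq_bigr => ? _].
by rewrite !mxE mulrDl scalerDl scalerA mulrA.
Qed.

Lemma tens_linear a : linear (@tens K n a).
Proof. by move=> k b c; rewrite /tens mulmxDr scalemxAr. Qed.

Lemma tens_linear_l b : linear (@tens K n ^~ b).
Proof. by move=> k a c; rewrite /tens linearP mulmxDl -scalemxAl. Qed.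

Lemma mS_r_linear : linear (mS_r H).
Proof. exact: matrix_comb_linear. Qed.

End HopfDataLinear.

HB.instance Definition _ (K : fieldType) n (H : hopf_data K n) :=
  GRing.isLinear.Build K _ _ _ (comulA H) (comulA_linear H).
HB.instance Definition _ (K : fieldType) n (H : hopf_data K n) :=
  GRing.isLinear.Build K _ _ _ (antiA H) (antiA_linear H).
HB.instance Definition _ (K : fieldType) n (H : hopf_data K n) :=
  GRing.isLinear.Build K _ K *%R (counitA H) (counitA_scalar H).
HB.instance Definition _ (K : fieldType) n (H : hopf_data K n) a :=
  GRing.isLinear.Build K _ _ _ (mulA H a) (mulA_linear H a).
HB.instance Definition _ (K : fieldType) n (H : hopf_data K n) X :=
  GRing.isLinear.Build K _ _ _ (mul2 H X) (mul2_linear H X).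
HB.instance Definition _ (K : fieldType) n (a : 'rV[K]_n) :=
  GRing.isLinear.Build K _ _ _ (@tens K n a) (tens_linear a).
HB.instance Definition _ (K : fieldType) n (H : hopf_data K n) :=
  GRing.isLinear.Build K _ _ _ (mS_r H) (mS_r_linear H).

Section TensorSquare.
Variables (K : fieldType) (n : nat).

Lemma tensE (a b : 'rV[K]_n) j k : tens a b j k = a 0 j * b 0 k.
Proof. by rewrite /tens mxE big_ord1 mxE. Qed.

(* C is an arbitrary Prop-valued predicate, so its row span is found
   classically, by induction on the codimension of a span inside C. *)
Lemma subspace_row_span (C : 'rV[K]_n -> Prop) : subspace C ->
  exists M : 'M[K]_n, forall v, C v <-> (v <= M)%MS.
Proof.
move=> [C0 C_lin].
have span_sub (M : 'M[K]_n) v : (forall u, (u <= M)%MS -> C u) -> C v ->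
    forall u, (u <= M + v)%MS -> C u.
  move=> MC Cv u /sub_addsmxP [[w1 w2] /= ->].
  rewrite [w2]mx11_scalar mul_scalar_mx addrC.
  by apply: C_lin => //; apply: MC; apply: submxMl.
suff /(_ n 0): forall d (M : 'M[K]_n), (n - \rank M <= d)%N ->
    (forall u, (u <= M)%MS -> C u) -> exists M' : 'M[K]_n, forall v, C v <-> (v <= M')%MS.
  apply=> [|u]; first by rewrite mxrank0 subn0.
  by rewrite submx0 => /eqP ->.
elim=> [|d IH] M codim MC.
  exists M => v; split=> [_|]; last exact: MC.
  by apply: submx_full; rewrite /row_full eqn_leq rank_leq_col -subn_eq0 -leqn0.
case: (classic (exists2 v, C v & ~~ (v <= M)%MS)) => [[v Cv vM]|no_new]; last first.
  exists M => v; split=> [Cv|]; last exact: MC.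
  by apply/negPn/negP => vM; apply: no_new; exists v.
apply: (IH (M + v)%MS) => [|u]; last exact: span_sub.
have lt_rank : (\rank M < \rank (M + v)%MS)%N.
  apply: rank_ltmx; rewrite ltmxE addsmxSl /=.
  by apply: contra vM => /(submx_trans (addsmxSr M v)).
by move: codim; rewrite !leq_subLR => /leq_trans; apply; rewrite addnS -addSn leq_add2r.
Qed.

Lemma in_tensor2_rows_cols (C : 'rV[K]_n -> Prop) (X : 'M[K]_(n, n)) :
  subspace C -> (forall p, C (row p X)) -> (forall q, C (col q X)^T) ->
  in_tensor2 C X.
Proof.
move=> C_sub C_row C_col; have [M CM] := subspace_row_span C_sub.
pose P := pinvmx M *m M.
have C_P v : C (v *m P) by apply/CM; rewrite mulmxA submxMl.
have PK v : C v -> v *m P = v by move=> /CM vM; rewrite mulmxA mulmxKpV.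
exists n, (fun k => (col k X)^T), (fun k => row k P); split=> // [k|].
  by rewrite rowE; apply: C_P.
have XP : X = X *m P by apply/row_matrixP => i; rewrite row_mul PK.
rewrite {1}XP; apply/matrixP => i j; rewrite mxE summxE; apply: eq_bigr => k _.
by rewrite tensE !mxE.
Qed.

End TensorSquare.

Section Hopf.
Variables (K : fieldType) (n : nat) (H : hopf_data K n).
Implicit Types (a b c d : 'rV[K]_n) (X Y Z : 'M[K]_(n, n)).
Local Notation e := (@bvec K n).
Local Notation D := (comulA H).
Local Notation S := (antiA H).
Local Notation eps := (counitA H).
Local Notation m := (mulA H).
Local Notation one := (oneA H).
Local Notation mul2 := (mul2 H).

Lemma bvecE i j : e i 0 j = (i == j)%:R.
Proof. by rewrite /bvec mxE eqxx eq_sym. Qed.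

Lemma sum_bvec (W : lmodType K) i (F : 'I_n -> W) : \sum_j e i 0 j *: F j = F i.
Proof.
rewrite (bigD1 i) //= bvecE eqxx scale1r big1 ?addr0 // => j /negbTE ji.
by rewrite bvecE eq_sym ji scale0r.
Qed.

Lemma sum_bvec_coef (c : 'I_n -> K) j : (\sum_i c i *: e i) 0 j = c j.
Proof.
rewrite summxE (bigD1 j) //= !mxE !eqxx mulr1 big1 ?addr0 // => i /negbTE ij.
by rewrite !mxE eq_sym ij mulr0.
Qed.

Lemma linear_bvec_expansion (W : lmodType K) (f : 'rV[K]_n -> W) :
  linear f -> forall a, f a = \sum_i a 0 i *: f (e i).
Proof.
move=> f_lin a; rewrite {1}(row_sum_delta a) (linear_fun_sum f_lin).
by under eq_bigr do rewrite (linear_funZ f_lin).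
Qed.

Lemma comulA_bvec i : D (e i) = hcomul H i.
Proof. exact: sum_bvec. Qed.

Lemma counitA_bvec i : eps (e i) = hcounit H i.
Proof.
rewrite /counitA (bigD1 i) //= bvecE eqxx mul1r big1 ?addr0 // => j /negbTE ij.
by rewrite bvecE eq_sym ij mul0r.
Qed.

Lemma mulA_bvec i j : m (e i) (e j) = hmul H i j.
Proof.
rewrite /Defs.mulA; under eq_bigr do under eq_bigr do rewrite -scalerA.
under eq_bigr do rewrite -scaler_sumr (sum_bvec j (fun k => hmul H _ k)).
exact: (sum_bvec i (fun k => hmul H k j)).
Qed.

Lemma comulA_coef a j k : D a j k = \sum_i a 0 i * hcomul H i j k.
Proof. by rewrite /comulA summxE; apply: eq_bigr => i _; rewrite mxE. Qed.

Lemma tens_suml I r (P : pred I) (F : I -> 'rV[K]_n) b :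
  tens (\sum_(i <- r | P i) F i) b = \sum_(i <- r | P i) tens (F i) b.
Proof. exact: (linear_fun_sum (tens_linear_l b)). Qed.

Lemma tens_Zl k a b : tens (k *: a) b = k *: tens a b.
Proof. exact: (linear_funZ (tens_linear_l b)). Qed.

Lemma mul2_suml I r (P : pred I) (F : I -> 'M[K]_(n, n)) Y :
  mul2 (\sum_(i <- r | P i) F i) Y = \sum_(i <- r | P i) mul2 (F i) Y.
Proof. exact: (linear_fun_sum (mul2_linear_l H Y)). Qed.

Lemma mul2Pl k X1 X2 Y : mul2 (k *: X1 + X2) Y = k *: mul2 X1 Y + mul2 X2 Y.
Proof. exact: mul2_linear_l. Qed.

Lemma mul2_Zl k X Y : mul2 (k *: X) Y = k *: mul2 X Y.
Proof. exact: (linear_funZ (mul2_linear_l H Y)). Qed.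

Lemma tens_bvec_expansion X : X = \sum_i \sum_j X i j *: tens (e i) (e j).
Proof.
rewrite {1}(matrix_sum_delta X); apply: eq_bigr => i _; apply: eq_bigr => j _.
by rewrite /tens /bvec trmx_delta mul_delta_mx.
Qed.

Lemma linear_tens_ext (W : lmodType K) (f g : 'M[K]_(n, n) -> W) :
  linear f -> linear g -> (forall a b, f (tens a b) = g (tens a b)) -> f =1 g.
Proof.
move=> f_lin g_lin fg X; rewrite (tens_bvec_expansion X).
rewrite (linear_fun_sum f_lin) (linear_fun_sum g_lin); apply: eq_bigr => i _.
rewrite (linear_fun_sum f_lin) (linear_fun_sum g_lin); apply: eq_bigr => j _.
by rewrite (linear_funZ f_lin) (linear_funZ g_lin) fg.
Qed.

Lemma mulA_bvec_expansion a b :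
  m a b = \sum_i \sum_j (a 0 i * b 0 j) *: m (e i) (e j).
Proof. by under [RHS]eq_bigr do under eq_bigr do rewrite mulA_bvec. Qed.

Lemma mul2_tens a b c d : mul2 (tens a b) (tens c d) = tens (m a c) (m b d).
Proof.
rewrite (mulA_bvec_expansion a c) (mulA_bvec_expansion b d) /Defs.mul2.
rewrite tens_suml; apply: eq_bigr => i _.
rewrite exchange_big tens_suml; apply: eq_bigr => k _.
rewrite tens_Zl linear_sum scaler_sumr; apply: eq_bigr => j _.
rewrite linear_sum scaler_sumr; apply: eq_bigr => l _.
by rewrite linearZ /= scalerA !tensE mulrACA.
Qed.

Hypothesis hH : is_hopf H.

Lemma mulAA : associative m.
Proof. by move=> a b c; case: hH. Qed.

Lemma mul1A : left_id one m.
Proof. by move=> a; case: hH => _ [/(_ a) []]. Qed.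

Lemma mulA1 : right_id one m.
Proof. by move=> a; case: hH => _ [/(_ a) []]. Qed.

Lemma comulA_mul a b : D (m a b) = mul2 (D a) (D b).
Proof. by case: hH => _ _ _ []. Qed.

Lemma comulA_one : D one = tens one one.
Proof. by case: hH => _ _ _ []. Qed.

Lemma counitA_mul a b : eps (m a b) = eps a * eps b.
Proof. by case: hH => _ _ _ []. Qed.

Lemma counitA_one : eps one = 1.
Proof. by case: hH => _ _ _ []. Qed.

Lemma antipode_l a : mS_l H (D a) = eps a *: one.
Proof. by case: hH => _ _ _ _ /(_ a) []. Qed.

Lemma antipode_r a : mS_r H (D a) = eps a *: one.
Proof. by case: hH => _ _ _ _ /(_ a) []. Qed.

Lemma comulA_counit_r a p : a 0 p = \sum_q D a p q * hcounit H q.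
Proof.
have [_ _ /(_ a) [_ Ea] _ _] := hH.
rewrite -{1}Ea /epsr; under eq_bigr do rewrite -scaler_suml.
by rewrite sum_bvec_coef.
Qed.

Lemma comulA_counit_l a q : a 0 q = \sum_p hcounit H p * D a p q.
Proof.
have [_ _ /(_ a) [Ea _] _ _] := hH.
rewrite -{1}Ea /epsl exchange_big /=; under eq_bigr do rewrite -scaler_suml.
by rewrite sum_bvec_coef.
Qed.

Lemma comulA_coassoc a p q s :
  \sum_r D a r s * D (e r) p q = \sum_r D a p r * D (e r) q s.
Proof.
have [_ [_ coassoc] _ _ _] := hH.
under eq_bigr do rewrite comulA_coef comulA_bvec mulr_suml.
under [RHS]eq_bigr do rewrite comulA_coef comulA_bvec mulr_suml.
rewrite exchange_big [RHS]exchange_big; apply: eq_bigr => i _.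
under eq_bigr do rewrite -mulrA.
under [RHS]eq_bigr do rewrite -mulrA.
by rewrite -!mulr_sumr coassoc.
Qed.

Lemma mul2A : associative mul2.
Proof.
move=> X Y Z; move: X; apply: linear_tens_ext => [k X1 X2|k X1 X2|a b] /=.
- exact: mul2Pl.
- by rewrite !mul2Pl.
move: Y; apply: linear_tens_ext => [k Y1 Y2|k Y1 Y2|c d] /=.
- by rewrite mul2Pl linearP.
- by rewrite linearP mul2Pl.
move: Z; apply: linear_tens_ext => [k Z1 Z2|k Z1 Z2|x y] /=.
- by rewrite !linearP.
- by rewrite linearP.
by rewrite !mul2_tens !mulAA.
Qed.

Lemma mul2_1r X : mul2 X (tens one one) = X.
Proof.
move: X; apply: linear_tens_ext => [k X1 X2|//|a b]; first exact: mul2Pl.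
by rewrite mul2_tens !mulA1.
Qed.

Lemma mul2_1l X : mul2 (tens one one) X = X.
Proof.
move: X; apply: linear_tens_ext => [k X1 X2|//|a b]; first exact: linearP.
by rewrite mul2_tens !mul1A.
Qed.

Lemma mS_r_tens a b : mS_r H (tens a b) = m a (S b).
Proof.
rewrite (linear_bvec_expansion (antiA_linear H) b).
rewrite (linear_bvec_expansion (mulA_linear_l H _) a); apply: eq_bigr => j _.
rewrite (linear_sum (m _)) scaler_sumr; apply: eq_bigr => k _.
by rewrite tensE linearZ /= scalerA.
Qed.

Lemma comulA_coassoc_sum (W : lmodType K) a (G : 'I_n -> 'I_n -> 'I_n -> W) :
  \sum_p \sum_q \sum_r \sum_s (D a p q * D (e p) r s) *: G r s q =
  \sum_r \sum_p \sum_s \sum_q (D a r p * D (e p) s q) *: G r s q.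
Proof.
transitivity (\sum_r \sum_s \sum_q \sum_p (D a p q * D (e p) r s) *: G r s q).
  rewrite exchange_big; under eq_bigr do rewrite exchange_big.
  under eq_bigr do under eq_bigr do rewrite exchange_big.
  by rewrite exchange_big; under eq_bigr do rewrite exchange_big.
transitivity (\sum_r \sum_s \sum_q \sum_p (D a r p * D (e p) s q) *: G r s q).
  apply: eq_bigr => r _; apply: eq_bigr => s _; apply: eq_bigr => q _.
  by rewrite -!scaler_suml comulA_coassoc.
apply: eq_bigr => r _; rewrite [RHS]exchange_big; apply: eq_bigr => s _.
by rewrite exchange_big.
Qed.

(* Convolution in Hom(A, A ⊗ A), whose unit is unit_counit. *)
Definition conv (f g : 'rV[K]_n -> 'M[K]_(n, n)) a :=
  \sum_p \sum_q D a p q *: mul2 (f (e p)) (g (e q)).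

Definition unit_counit a := eps a *: tens one one.

Lemma eq_conv f f' g g' :
  (forall i, f (e i) = f' (e i)) -> (forall i, g (e i) = g' (e i)) ->
  conv f g =1 conv f' g'.
Proof.
by move=> ff' gg' a; apply: eq_bigr => p _; apply: eq_bigr => q _; rewrite ff' gg'.
Qed.

Lemma conv_unit_r f : linear f -> conv f unit_counit =1 f.
Proof.
move=> f_lin a; rewrite (linear_bvec_expansion f_lin a); apply: eq_bigr => p _.
under eq_bigr do rewrite linearZ /= mul2_1r scalerA counitA_bvec.
by rewrite -scaler_suml -comulA_counit_r.
Qed.

Lemma conv_unit_l g : linear g -> conv unit_counit g =1 g.
Proof.
move=> g_lin a; rewrite (linear_bvec_expansion g_lin a) /conv exchange_big.
apply: eq_bigr => q _.
under eq_bigr do rewrite mul2_Zl mul2_1l counitA_bvec scalerA mulrC.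
by rewrite -scaler_suml -comulA_counit_l.
Qed.

Lemma convA f g h : conv (conv f g) h =1 conv f (conv g h).
Proof.
move=> a; rewrite /conv.
transitivity (\sum_p \sum_q \sum_r \sum_s (D a p q * D (e p) r s) *:
   mul2 (mul2 (f (e r)) (g (e s))) (h (e q))).
  apply: eq_bigr => p _; apply: eq_bigr => q _.
  rewrite mul2_suml scaler_sumr; apply: eq_bigr => r _.
  by rewrite mul2_suml scaler_sumr; apply: eq_bigr => s _; rewrite mul2_Zl scalerA.
rewrite comulA_coassoc_sum; apply: eq_bigr => r _; apply: eq_bigr => p _.
rewrite (linear_sum (mul2 _)) scaler_sumr; apply: eq_bigr => s _.
rewrite (linear_sum (mul2 _)) scaler_sumr; apply: eq_bigr => q _.
by rewrite linearZ /= scalerA mul2A.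
Qed.

Definition anti2_comul_op a :=
  \sum_p \sum_q D a p q *: tens (S (e q)) (S (e p)).

Lemma anti2_comul_op_linear : linear anti2_comul_op.
Proof. by move=> k a b; rewrite /anti2_comul_op linearP; apply: matrix_comb_linear. Qed.

Lemma comulA_anti_linear : linear (fun a => D (S a)).
Proof. by move=> k a b; rewrite !linearP. Qed.

Lemma conv_comul_anti : conv D (fun a => D (S a)) =1 unit_counit.
Proof.
move=> a; rewrite /conv.
under eq_bigr do under eq_bigr do rewrite -comulA_mul -linearZ.
under eq_bigr do rewrite -linear_sum.
rewrite -linear_sum; change (D (mS_r H (D a)) = unit_counit a).
by rewrite antipode_r linearZ /= comulA_one.
Qed.

Lemma mul2_anti_tens_comul b x :
  \sum_q \sum_s D b q s *: mul2 (tens (S (e q)) x) (D (e s)) = tens one (m x b).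
Proof.
transitivity (\sum_q \sum_s \sum_t \sum_u (D b q s * D (e s) t u) *:
   tens (m (S (e q)) (e t)) (m x (e u))).
  apply: eq_bigr => q _; apply: eq_bigr => s _.
  rewrite {1}(tens_bvec_expansion (D (e s))) (linear_sum (mul2 _)) scaler_sumr.
  apply: eq_bigr => t _; rewrite (linear_sum (mul2 _)) scaler_sumr.
  by apply: eq_bigr => u _; rewrite linearZ /= mul2_tens scalerA.
rewrite -(comulA_coassoc_sum b (fun q t u => tens (m (S (e q)) (e t)) (m x (e u)))) /=.
transitivity (\sum_p \sum_q D b p q *: tens (mS_l H (D (e p))) (m x (e q))).
  apply: eq_bigr => p _; apply: eq_bigr => q _.
  rewrite /mS_l tens_suml scaler_sumr; apply: eq_bigr => r _.
  by rewrite tens_suml scaler_sumr; apply: eq_bigr => s _; rewrite tens_Zl !scalerA.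
under eq_bigr do under eq_bigr do rewrite antipode_l counitA_bvec tens_Zl scalerA.
rewrite exchange_big [in RHS](linear_bvec_expansion (mulA_linear H x) b).
rewrite (linear_sum (tens _)); apply: eq_bigr => q _.
by rewrite -scaler_suml linearZ /=; under eq_bigr do rewrite mulrC; rewrite -comulA_counit_l.
Qed.

Lemma conv_anti_comul : conv anti2_comul_op D =1 unit_counit.
Proof.
move=> a; rewrite /conv /anti2_comul_op.
transitivity (\sum_r \sum_s \sum_p \sum_q (D a r s * D (e r) p q) *:
   mul2 (tens (S (e q)) (S (e p))) (D (e s))).
  apply: eq_bigr => r _; apply: eq_bigr => s _.
  rewrite mul2_suml scaler_sumr; apply: eq_bigr => p _.
  by rewrite mul2_suml scaler_sumr; apply: eq_bigr => q _; rewrite mul2_Zl scalerA.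
rewrite (comulA_coassoc_sum a (fun p q s => mul2 (tens (S (e q)) (S (e p))) (D (e s)))) /=.
transitivity (\sum_r \sum_p D a r p *: tens one (m (S (e r)) (e p))).
  apply: eq_bigr => r _; apply: eq_bigr => p _.
  rewrite -mul2_anti_tens_comul scaler_sumr; apply: eq_bigr => s _.
  by rewrite scaler_sumr; apply: eq_bigr => q _; rewrite scalerA.
have -> : unit_counit a = tens one (mS_l H (D a)) by rewrite antipode_l linearZ.
rewrite /mS_l (linear_sum (tens _)); apply: eq_bigr => r _.
by rewrite (linear_sum (tens _)); apply: eq_bigr => p _; rewrite linearZ.
Qed.

(* Both sides are convolution inverses of D. *)
Lemma comulA_anti a : D (S a) = anti2_comul_op a.
Proof.
rewrite -(conv_unit_r anti2_comul_op_linear a); symmetry.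
transitivity (conv anti2_comul_op (conv D (fun a => D (S a))) a).
  by apply: eq_conv => // i; rewrite conv_comul_anti.
rewrite -convA.
transitivity (conv unit_counit (fun a => D (S a)) a).
  by apply: eq_conv => // i; rewrite conv_anti_comul.
exact: (conv_unit_l comulA_anti_linear a).
Qed.

Lemma counitA_anti a : eps (S a) = eps a.
Proof.
have := congr1 eps (antipode_l a).
rewrite linearZ /= counitA_one mulr1 /mS_l (linear_sum eps) => <-.
rewrite (linear_bvec_expansion (antiA_linear H) a) (linear_sum eps).
apply: eq_bigr => j _; rewrite (linear_sum eps) linearZ /= (comulA_counit_r a j) mulr_suml.
by apply: eq_bigr => k _; rewrite linearZ /= counitA_mul counitA_bvec mulrAC -mulrA.
Qed.

Lemma counitA_comul_row a p : eps (row p (D a)) = a 0 p.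
Proof. by rewrite (comulA_counit_r a p); apply: eq_bigr => q _; rewrite mxE. Qed.

Lemma counitA_comul_col a q : eps (col q (D a))^T = a 0 q.
Proof. by rewrite (comulA_counit_l a q); apply: eq_bigr => p _; rewrite !mxE mulrC. Qed.

Hypothesis antiAK : involutive S.

Lemma antipode_op_l a : \sum_j \sum_k D a j k *: m (S (e k)) (e j) = eps a *: one.
Proof.
rewrite -counitA_anti -antipode_r comulA_anti /anti2_comul_op (linear_sum (mS_r H)).
apply: eq_bigr => j _; rewrite (linear_sum (mS_r H)); apply: eq_bigr => k _.
by rewrite linearZ /= mS_r_tens antiAK.
Qed.

Section Representation.
Variables (V : lmodType K) (Pi : 'rV[K]_n -> V -> V) (phi : V).
Hypothesis hPi : is_rep H Pi.
Local Notation Tr := (T_r H Pi phi).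
Local Notation Tl := (T_l H Pi phi).

Lemma act_linear a : linear (Pi a).
Proof. by case: hPi => Pi_lin _ _ _ k u v; rewrite Pi_lin. Qed.

Lemma act_linear_l v : linear (Pi ^~ v).
Proof. by case: hPi => _ Pi_lin _ _ k a b; rewrite Pi_lin. Qed.

Lemma act_mul a b v : Pi (m a b) v = Pi a (Pi b v).
Proof. by case: hPi. Qed.

Lemma act_one v : Pi one v = v.
Proof. by case: hPi. Qed.

Lemma act_sumr I r (P : pred I) (F : I -> V) a :
  Pi a (\sum_(i <- r | P i) F i) = \sum_(i <- r | P i) Pi a (F i).
Proof. exact: (linear_fun_sum (act_linear a)). Qed.

Lemma act_Zr k a v : Pi a (k *: v) = k *: Pi a v.
Proof. exact: (linear_funZ (act_linear a)). Qed.

Lemma act_suml I r (P : pred I) (F : I -> 'rV[K]_n) v :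
  Pi (\sum_(i <- r | P i) F i) v = \sum_(i <- r | P i) Pi (F i) v.
Proof. exact: (linear_fun_sum (act_linear_l v)). Qed.

Lemma act_Zl k a v : Pi (k *: a) v = k *: Pi a v.
Proof. exact: (linear_funZ (act_linear_l v)). Qed.

(* The e_j-coefficient of (id ⊗ Π)(X)(1 ⊗ φ): T_r a unfolds to
   forall j, id_tens_act (D a) j = a_j φ. *)
Definition id_tens_act X j := \sum_k X j k *: Pi (e k) phi.

Lemma id_tens_act_linear j : linear (id_tens_act ^~ j).
Proof.
move=> k X Y; rewrite /id_tens_act scaler_sumr -big_split; apply: eq_bigr => i _.
by rewrite !mxE scalerDl scalerA.
Qed.

Lemma id_tens_act_tens a b j : id_tens_act (tens a b) j = a 0 j *: Pi b phi.
Proof.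
rewrite /id_tens_act (linear_bvec_expansion (act_linear_l phi) b) scaler_sumr.
by apply: eq_bigr => k _; rewrite tensE scalerA.
Qed.

(* The e_k-coefficient of (Π ⊗ id)(X)(φ ⊗ 1), likewise for T_l. *)
Definition act_tens_id X k := \sum_j X j k *: Pi (e j) phi.

Lemma act_tens_id_linear k : linear (act_tens_id ^~ k).
Proof.
move=> c X Y; rewrite /act_tens_id scaler_sumr -big_split; apply: eq_bigr => i _.
by rewrite !mxE scalerDl scalerA.
Qed.

Lemma act_tens_id_tens a b k : act_tens_id (tens a b) k = b 0 k *: Pi a phi.
Proof.
rewrite /act_tens_id (linear_bvec_expansion (act_linear_l phi) a) scaler_sumr.
by apply: eq_bigr => j _; rewrite tensE scalerA mulrC.
Qed.

Lemma T_r_subspace : subspace Tr.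
Proof.
split=> [j|k a b ha hb j].
  by rewrite linear0 big1 ?mxE ?scale0r // => k _; rewrite mxE scale0r.
rewrite linearP; have := id_tens_act_linear j k (D a) (D b); rewrite /id_tens_act => ->.
by rewrite ha hb !mxE scalerDl scalerA.
Qed.

Lemma T_r_fixes a : Tr a -> fixes H Pi phi a.
Proof.
move=> ha; rewrite /fixes (linear_bvec_expansion (act_linear_l phi) a).
under eq_bigr => k _ do rewrite (comulA_counit_l a k) scaler_suml.
rewrite exchange_big /=.
under eq_bigr => p _ do (under eq_bigr do rewrite -scalerA; rewrite -scaler_sumr ha).
by rewrite /counitA scaler_suml; apply: eq_bigr => p _; rewrite scalerA mulrC.
Qed.

Lemma T_r_comul_row a p : Tr a -> Tr (row p (D a)).
Proof.
move=> ha j.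
have Dcoef k : D (row p (D a)) j k = \sum_r D a r k * D (e r) p j.
  rewrite comulA_coef; under eq_bigr do rewrite mxE -comulA_bvec.
  by rewrite -comulA_coassoc.
under eq_bigr do rewrite Dcoef scaler_suml.
rewrite exchange_big /=.
under eq_bigr => r _ do (under eq_bigr do rewrite mulrC -scalerA; rewrite -scaler_sumr ha).
rewrite mxE comulA_coef scaler_suml; apply: eq_bigr => r _.
by rewrite scalerA comulA_bvec mulrC.
Qed.

Lemma T_l_comul_col a q : Tl a -> Tl (col q (D a))^T.
Proof.
move=> ha k.
have Dcoef j : D (col q (D a))^T j k = \sum_r D a j r * D (e r) k q.
  rewrite comulA_coef; under eq_bigr do rewrite !mxE -comulA_bvec.
  by rewrite comulA_coassoc.
under eq_bigr do rewrite Dcoef scaler_suml.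
rewrite exchange_big /=.
under eq_bigr => r _ do (under eq_bigr do rewrite mulrC -scalerA; rewrite -scaler_sumr ha).
rewrite !mxE comulA_coef scaler_suml; apply: eq_bigr => r _.
by rewrite scalerA comulA_bvec mulrC.
Qed.

Lemma T_r_anti_fixes a : Tr a -> Pi (S a) phi = eps a *: phi.
Proof.
move=> ha; have := congr1 (Pi^~ phi) (antipode_l a).
rewrite /= act_Zl act_one /mS_l act_suml => <-.
rewrite (linear_bvec_expansion (antiA_linear H) a) act_suml; apply: eq_bigr => j _.
rewrite act_Zl [RHS]act_suml.
under [RHS]eq_bigr do rewrite act_Zl act_mul -act_Zr.
by rewrite -act_sumr (ha j) act_Zr.
Qed.

Lemma anti_T_r a : Tr a -> Tl (S a).
Proof.
move=> ha k; change (act_tens_id (D (S a)) k = S a 0 k *: phi).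
rewrite comulA_anti (linear_fun_sum (act_tens_id_linear k)).
transitivity (\sum_p S (e p) 0 k *: Pi (S (row p (D a))) phi).
  apply: eq_bigr => p _; rewrite (linear_fun_sum (act_tens_id_linear k)).
  rewrite [row p _]row_sum_delta linear_sum /= act_suml scaler_sumr; apply: eq_bigr => q _.
  rewrite (linear_funZ (act_tens_id_linear k)) act_tens_id_tens [S (_ *: _)]linearZ /= act_Zl mxE.
  by rewrite !scalerA mulrC.
under eq_bigr => p _ do
  rewrite (T_r_anti_fixes (T_r_comul_row p ha)) counitA_comul_row scalerA.
rewrite (linear_bvec_expansion (antiA_linear H) a) summxE scaler_suml.
by apply: eq_bigr => p _; rewrite mxE mulrC.
Qed.

Lemma T_l_anti_fixes a : Tl a -> Pi (S a) phi = eps a *: phi.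
Proof.
move=> ha; have := congr1 (Pi^~ phi) (antipode_op_l a).
rewrite /= act_Zl act_one act_suml => <-.
under [RHS]eq_bigr do rewrite act_suml.
rewrite [RHS]exchange_big /= (linear_bvec_expansion (antiA_linear H) a) act_suml.
apply: eq_bigr => k _; under [RHS]eq_bigr do rewrite act_Zl act_mul -act_Zr.
by rewrite -act_sumr (ha k) act_Zr act_Zl.
Qed.

Lemma anti_T_l a : Tl a -> Tr (S a).
Proof.
move=> ha j; change (id_tens_act (D (S a)) j = S a 0 j *: phi).
rewrite comulA_anti /anti2_comul_op exchange_big (linear_fun_sum (id_tens_act_linear j)).
transitivity (\sum_q S (e q) 0 j *: Pi (S (col q (D a))^T) phi).
  apply: eq_bigr => q _; rewrite (linear_fun_sum (id_tens_act_linear j)).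
  rewrite [(col q _)^T]row_sum_delta linear_sum /= act_suml scaler_sumr.
  apply: eq_bigr => p _; rewrite (linear_funZ (id_tens_act_linear j)) id_tens_act_tens.
  by rewrite [S (_ *: _)]linearZ /= act_Zl !mxE !scalerA mulrC.
under eq_bigr => q _ do
  rewrite (T_l_anti_fixes (T_l_comul_col q ha)) counitA_comul_col scalerA.
rewrite (linear_bvec_expansion (antiA_linear H) a) summxE scaler_suml.
by apply: eq_bigr => q _; rewrite mxE mulrC.
Qed.

Lemma T_r_one : Tr one.
Proof. by move=> j; rewrite -/(id_tens_act (D one) j) comulA_one id_tens_act_tens act_one. Qed.

Lemma id_tens_act_mul2_comul x y b j : Tr b ->
  id_tens_act (mul2 (tens x y) (D b)) j = m x b 0 j *: Pi y phi.
Proof.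
move=> hb; rewrite {1}(tens_bvec_expansion (D b)) (linear_sum (mul2 _)).
rewrite (linear_fun_sum (id_tens_act_linear j)).
rewrite [m x b](linear_bvec_expansion (mulA_linear H x)) summxE scaler_suml.
apply: eq_bigr => r _; rewrite (linear_sum (mul2 _)) (linear_fun_sum (id_tens_act_linear j)).
under eq_bigr do rewrite linearZ /= mul2_tens (linear_funZ (id_tens_act_linear j))
  id_tens_act_tens act_mul scalerA mulrC -scalerA -act_Zr.
by rewrite -scaler_sumr -act_sumr hb act_Zr scalerA mxE mulrC.
Qed.

Lemma T_r_mul a b : Tr a -> Tr b -> Tr (m a b).
Proof.
move=> ha hb j; change (id_tens_act (D (m a b)) j = m a b 0 j *: phi).
rewrite comulA_mul {1}(tens_bvec_expansion (D a)) mul2_suml.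
rewrite (linear_fun_sum (id_tens_act_linear j)).
rewrite [m a b](linear_bvec_expansion (mulA_linear_l H b)) summxE scaler_suml.
apply: eq_bigr => p _; rewrite mul2_suml (linear_fun_sum (id_tens_act_linear j)).
under eq_bigr do rewrite mul2_Zl (linear_funZ (id_tens_act_linear j))
  id_tens_act_mul2_comul // scalerA mulrC -scalerA.
by rewrite -scaler_sumr (ha p) scalerA mxE mulrC.
Qed.

Lemma T_r_comul_fixing (B : 'rV[K]_n -> Prop) a :
  (forall b, B b -> fixes H Pi phi b) -> in_tensor2 B (D a) -> Tr a.
Proof.
move=> B_fixes [k [us [vs [_ vsB Da]]]] j.
change (id_tens_act (D a) j = a 0 j *: phi).
rewrite (comulA_counit_r a j) Da (linear_fun_sum (id_tens_act_linear j)).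
under eq_bigr do rewrite id_tens_act_tens (B_fixes _ (vsB _)) scalerA.
rewrite -scaler_suml; congr (_ *: _).
under [RHS]eq_bigr do rewrite summxE mulr_suml.
rewrite [RHS]exchange_big /=; apply: eq_bigr => i _.
by rewrite /counitA mulr_sumr; apply: eq_bigr => q _; rewrite tensE mulrA.
Qed.

Lemma T_r_hopf_subalg : (forall a, Tr a <-> Tl a) -> hopf_subalg H Tr.
Proof.
move=> TrTl; split.
- exact: T_r_subspace.
- exact: T_r_one.
- exact: T_r_mul.
- move=> a ha; apply: in_tensor2_rows_cols T_r_subspace _ _ => [p|q].
    exact: T_r_comul_row.
  by apply/TrTl; apply: T_l_comul_col; apply/TrTl.
- by move=> a /anti_T_r /TrTl.
Qed.

Lemma hopf_subalg_fixing_sub_T_r (B : 'rV[K]_n -> Prop) :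
  hopf_subalg H B -> (forall b, B b -> fixes H Pi phi b) -> forall a, B a -> Tr a.
Proof. by move=> [_ _ _ B_comul _] B_fixes a /B_comul; apply: T_r_comul_fixing. Qed.

Theorem hopf_stabilizer_tfae (T : 'rV[K]_n -> Prop) :
  largest_fixing_hopf_subalg H Pi phi T ->
  [<-> (forall a, Tr a <-> Tl a); hopf_subalg H Tr;
       (forall a, Tr a <-> T a); (forall a, Tl a -> Tr a)].
Proof.
move=> [T_hopf T_fixes T_max]; have [_ _ _ _ T_anti] := T_hopf.
tfae=> [TrTl | Tr_hopf | TrT | TlTr].
- exact: T_r_hopf_subalg.
- move=> a; split; first exact: T_max Tr_hopf T_r_fixes a.
  exact: hopf_subalg_fixing_sub_T_r T_hopf T_fixes a.
- by move=> a /anti_T_l /TrT /T_anti /TrT; rewrite antiAK.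
- move=> a; split=> [/anti_T_r /TlTr /anti_T_r|]; [by rewrite antiAK | exact: TlTr].
Qed.

End Representation.

End Hopf.

Unset Implicit Arguments.
Local Open Scope complex_scope.

Theorem proposition1 (R : realType) (n : nat) (H : hopf_data R[i] n)
  (hH : is_hopf H) (hS2 : forall a, antiA H (antiA H a) = a)
  (V : lmodType R[i]) (Pi : 'rV[R[i]]_n -> V -> V) (hPi : is_rep H Pi)
  (phi : V) (T : 'rV[R[i]]_n -> Prop)
  (hT : largest_fixing_hopf_subalg H Pi phi T) :
  [<-> (forall a, T_r H Pi phi a <-> T_l H Pi phi a);
       hopf_subalg H (T_r H Pi phi);
       (forall a, T_r H Pi phi a <-> T a);
       (forall a, T_l H Pi phi a -> T_r H Pi phi a)].
Proof. exact (hopf_stabilizer_tfae hH hS2 hPi hT). Qed.
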